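(* Let $A$ and $B$ be finite simple graphs, and fix $a \in V(A)$ and $b \in V(B)$. Let $D$ be the graph obtained from the disjoint union of $A$ and $B$ by identifying the vertices $a$ and $b$. If $A$ and $B$ both satisfy the bunkbed conjecture, then $D$ satisfies the bunkbed conjecture.
   Context: All graphs are finite and simple. For a graph $G$, a weight is a function $\mu\colon E(G)\to[0,1]$; the associated edge-percolation probability space has sample space $\Omega=\mathscr P(E(G))$ (all subsets of edges), with $\mathbb P_{G,\mu}(X)=\prod_{e\in X}\mu(e)\prod_{e\notin X}(1-\mu(e))$ for $X\subseteq E(G)$, i.e. each edge $e$ is independently open with probability $\mu(e)$. For $x,y\in V(G)$, $(x\sim y)$ (or $(x\sim_G y)$) is the event that $x$ and $y$ are joined by a path of open edges. The bunkbed graph $BB(G)=G\,\Box\, K_2$ has vertex set $V(G)\times\{0,1\}$, writing $x^-=(x,0)$, $x^+=(x,1)$, and edges $x^-y^-$ and $x^+y^+$ for every $xy\in E(G)$, plus the vertical edges $x^-x^+$ for every $x\in V(G)$. A weight $\mu$ on $BB(G)$ is symmetric if $\mu(x^-y^-)=\mu(x^+y^+)$ for every $xy\in E(G)$ (vertical edges may have arbitrary weights). A graph $G$ satisfies the bunkbed conjecture if for every symmetric weight $\mu$ on $BB(G)$ and all $x,y\in V(G)$, $\mathbb P_{BB(G),\mu}(x^-\sim y^-)\ge \mathbb P_{BB(G),\mu}(x^-\sim y^+)$. *)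

From HB Require Import structures.
From mathcomp Require Import all_boot all_order all_algebra.
From mathcomp Require Import reals.
Set Implicit Arguments. Unset Strict Implicit. Unset Printing Implicit Defensive.
Import Order.TTheory GRing.Theory Num.Theory.
Local Open Scope ring_scope.

Definition simple_graph (T : finType) (e : rel T) : Prop :=
  symmetric e /\ irreflexive e.

Definition edges (T : finType) (e : rel T) : {set {set T}} :=
  [set [set p.1; p.2] | p in [set p : T * T | e p.1 p.2]].

Definition joined (T : finType) (X : {set {set T}}) (x y : T) : bool :=
  connect (fun u v => [set u; v] \in X) x y.

Definition perc_prob (R : realType) (T : finType) (E : {set {set T}})
    (mu : {set T} -> R) (ev : pred {set {set T}}) : R :=
  \sum_(X in powerset E | ev X)
     ((\prod_(f in X) mu f) * (\prod_(f in E :\: X) (1 - mu f))).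

(* Bunkbed graph G box K_2: vertices T * bool, x^- = (x,false), x^+ = (x,true). *)
Definition bb_rel (T : finType) (e : rel T) : rel (T * bool) :=
  fun u v => ((u.2 == v.2) && e u.1 v.1) || ((u.1 == v.1) && (u.2 != v.2)).

Definition bunkbed (R : realType) (T : finType) (e : rel T) : Prop :=
  forall mu : {set (T * bool)} -> R,
    (forall f, f \in edges (bb_rel e) -> 0 <= mu f <= 1) ->
    (forall x y, e x y ->
       mu [set (x, false); (y, false)] = mu [set (x, true); (y, true)]) ->
    forall x y,
      perc_prob (edges (bb_rel e)) mu (fun X => joined X (x, false) (y, true))
      <= perc_prob (edges (bb_rel e)) mu (fun X => joined X (x, false) (y, false)).

(* Gluing A and B by identifying a in A with b in B.
   Vertex set: V(A) + (V(B) \ {b}); b is sent to a. *)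
Definition glue_vert (TA TB : finType) (b : TB) : finType :=
  (TA + {y : TB | y != b})%type.

Definition glue_inB (TA TB : finType) (a : TA) (b : TB) (y : TB) :
    glue_vert TA b :=
  match boolP (y != b) with
  | AltTrue h => inr (exist _ y h)
  | AltFalse _ => inl a
  end.

Definition glue_rel (TA TB : finType) (eA : rel TA) (eB : rel TB)
    (a : TA) (b : TB) : rel (glue_vert TA b) :=
  fun u v =>
    [exists x : TA, exists y : TA, eA x y && (inl x == u) && (inl y == v)]
    || [exists x : TB, exists y : TB,
          eB x y && (glue_inB a b x == u) && (glue_inB a b y == v)].
Arguments glue_inB {TA TB} a b y.
Arguments glue_rel {TA TB} eA eB a b u v.

(* Let g0 be the glued vertex and call the vertical edge g0^- g0^+ the post.  The
   edges of BB(A) and those of BB(B) other than the post are disjoint, hence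
   independent.  If x and y both lie in A, the edges of B matter only through whether
   they join g0^- to g0^+, which acts like an extra chance c of the post being open:
   P(x^- ~ y^s) = c P_A'(x^- ~ y^s) + (1 - c) P_A(x^- ~ y^s), with A' the graph A
   with the post forced open, and the inequality holds termwise.  If x lies in A and
   y does not, every path crosses at g0^- or g0^+, so by inclusion-exclusion
   P(x^- ~ y^s) = a- b-(s) + a+ b+(s) - a+- b+-(s), where a-, a+, a+- are the
   probabilities that x^- reaches g0^-, g0^+, both, in BB(A), and b-(s), b+(s),
   b+-(s) those for y^s in BB(B) without the post.  Flipping the levels of B gives
   b-(+) = b+(-), b+(+) = b-(-) and b+-(+) = b+-(-), so the bunkbed difference is
   (a- - a+) (b-(-) - b+(-)), a product of two factors that are nonnegative by the
   bunkbed property of A and of B with the post closed. *)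

From mathcomp Require Import all_boot all_order all_algebra.
From mathcomp Require Import reals.
From mathcomp Require Import ring.
Set Implicit Arguments. Unset Strict Implicit. Unset Printing Implicit Defensive.
Import Order.TTheory GRing.Theory Num.Theory.
Local Open Scope ring_scope.

(** * Percolation expectations *)

Lemma setDU_disjoint (T : finType) (E1 E2 X1 X2 : {set T}) : [disjoint E1 & E2] ->
  X1 \subset E1 -> X2 \subset E2 ->
  (E1 :|: E2) :\: (X1 :|: X2) = (E1 :\: X1) :|: (E2 :\: X2).
Proof.
move=> dE sX1 sX2; have dE' : [disjoint E2 & E1] by rewrite disjoint_sym.
rewrite setDUl !setDUr (setDidPl (disjointWr sX2 dE)) (setDidPl (disjointWr sX1 dE')).
by rewrite (setIidPl (subsetDl _ _)) (setIidPr (subsetDl _ _)).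
Qed.

Lemma setUIl_disjoint (T : finType) (E1 E2 X1 X2 : {set T}) : [disjoint E1 & E2] ->
  X1 \subset E1 -> X2 \subset E2 -> (X1 :|: X2) :&: E1 = X1.
Proof.
move=> dE sX1 sX2; rewrite setIUl (setIidPl sX1).
by rewrite (disjoint_setI0 (disjointWl sX2 _)) ?setU0 // disjoint_sym.
Qed.

Section PercolationExpectation.
Variables (R : comNzRingType) (V : finType).
Implicit Types (E X : {set {set V}}) (mu : {set V} -> R) (h : {set {set V}} -> R).

Definition perc_weight E mu X : R :=
  (\prod_(f in X) mu f) * \prod_(f in E :\: X) (1 - mu f).

Definition perc_exp E mu h : R := \sum_(X in powerset E) perc_weight E mu X * h X.

Lemma eq_perc_exp E mu h h' :
  {in powerset E, h =1 h'} -> perc_exp E mu h = perc_exp E mu h'.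
Proof. by move=> eqh; apply: eq_bigr => X /eqh ->. Qed.

Lemma eq_perc_exp_mu E mu mu' h :
  {in E, mu =1 mu'} -> perc_exp E mu h = perc_exp E mu' h.
Proof.
move=> eqmu; apply: eq_bigr => X; rewrite powersetE => sXE; congr (_ * _ * _).
  by apply: eq_bigr => f fX; rewrite eqmu // (subsetP sXE).
by apply: eq_bigr => f /setDP[fE _]; rewrite eqmu.
Qed.

Lemma perc_expD E mu h h' :
  perc_exp E mu (fun X => h X + h' X) = perc_exp E mu h + perc_exp E mu h'.
Proof. by rewrite -big_split; apply: eq_bigr => X _; rewrite mulrDr. Qed.

Lemma perc_expZ E mu c h :
  perc_exp E mu (fun X => c * h X) = c * perc_exp E mu h.
Proof. by rewrite mulr_sumr; apply: eq_bigr => X _; rewrite mulrCA. Qed.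

Lemma perc_exp0 E mu : perc_exp E mu (fun=> 0) = 0.
Proof. by apply: big1 => X _; rewrite mulr0. Qed.

Lemma perc_expZr E mu c h :
  perc_exp E mu (fun X => h X * c) = perc_exp E mu h * c.
Proof. by rewrite mulr_suml; apply: eq_bigr => X _; rewrite mulrA. Qed.

Lemma perc_expB E mu h h' :
  perc_exp E mu (fun X => h X - h' X) = perc_exp E mu h - perc_exp E mu h'.
Proof. by rewrite -sumrB; apply: eq_bigr => X _; rewrite mulrBr. Qed.

Lemma perc_exp_set1 f mu h :
  perc_exp [set f] mu h = mu f * h [set f] + (1 - mu f) * h set0.
Proof.
have f_notin0 : [set f] \notin [set set0].
  by rewrite inE; apply/eqP => /setP/(_ f); rewrite !inE eqxx.
rewrite /perc_exp powerset1 setUC big_setU1 //= big_set1 /perc_weight setDv setD0.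
by rewrite !big_set0 !big_set1 mul1r mulr1 addrC.
Qed.

Lemma perc_weight_setU E1 E2 mu X1 X2 : [disjoint E1 & E2] ->
  X1 \subset E1 -> X2 \subset E2 ->
  perc_weight (E1 :|: E2) mu (X1 :|: X2) = perc_weight E1 mu X1 * perc_weight E2 mu X2.
Proof.
move=> dE sX1 sX2.
have prodU (A B : {set {set V}}) (F : {set V} -> R) : [disjoint A & B] ->
    \prod_(f in A :|: B) F f = (\prod_(f in A) F f) * \prod_(f in B) F f.
  move=> dAB; rewrite (eq_bigl [predU A & B]); first exact: bigU.
  by move=> f; rewrite !inE.
have dX : [disjoint X1 & X2] by apply: disjointWl sX1 (disjointWr sX2 dE).
have dD : [disjoint E1 :\: X1 & E2 :\: X2].
  exact: disjointWl (subsetDl _ _) (disjointWr (subsetDl _ _) dE).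
rewrite /perc_weight (setDU_disjoint dE sX1 sX2).
by rewrite (prodU _ _ _ dX) (prodU _ _ _ dD) mulrACA.
Qed.

Lemma perc_exp_setU E1 E2 mu h : [disjoint E1 & E2] ->
  perc_exp (E1 :|: E2) mu h =
  perc_exp E1 mu (fun X1 => perc_exp E2 mu (fun X2 => h (X1 :|: X2))).
Proof.
move=> dE; have dE' : [disjoint E2 & E1] by rewrite disjoint_sym.
pose P := setX (powerset E1) (powerset E2).
have imP : powerset (E1 :|: E2) = [set p.1 :|: p.2 | p in P].
  apply/setP => X; rewrite powersetE; apply/idP/imsetP => [sX|[[X1 X2]]].
    exists (X :&: E1, X :&: E2); first by rewrite !inE !subsetIr.
    by rewrite /= -setIUr (setIidPl sX).
  by rewrite !inE /= => /andP[s1 s2] ->; apply: setUSS.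
have injP : {in P &, injective (fun p => p.1 :|: p.2)}.
  move=> [X1 X2] [Y1 Y2]; rewrite !inE /= => /andP[sX1 sX2] /andP[sY1 sY2] eXY.
  congr pair.
    by rewrite -(setUIl_disjoint dE sX1 sX2) eXY (setUIl_disjoint dE sY1 sY2).
  by rewrite -(setUIl_disjoint dE' sX2 sX1) setUC eXY setUC (setUIl_disjoint dE' sY2 sY1).
rewrite /perc_exp imP big_imset //=.
rewrite (eq_bigl (fun p => (p.1 \in powerset E1) && (p.2 \in powerset E2))); last first.
  by move=> [X1 X2]; rewrite !inE.
rewrite -(pair_big_dep (fun X1 => X1 \in powerset E1) (fun _ X2 => X2 \in powerset E2)
  (fun X1 X2 => perc_weight (E1 :|: E2) mu (X1 :|: X2) * h (X1 :|: X2))) /=.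
apply: eq_bigr => X1; rewrite powersetE => sX1; rewrite mulr_sumr.
apply: eq_bigr => X2; rewrite powersetE => sX2.
by rewrite perc_weight_setU // mulrA.
Qed.

Lemma perc_exp_edge E f mu h : f \in E ->
  perc_exp E mu h = mu f * perc_exp (E :\ f) mu (fun X => h (f |: X))
                    + (1 - mu f) * perc_exp (E :\ f) mu h.
Proof.
move=> fE; rewrite -{1}(setD1K fE) perc_exp_setU; last by rewrite disjoints1 !inE eqxx.
by rewrite perc_exp_set1; congr (_ + _ * _); apply: eq_perc_exp => X _; rewrite set0U.
Qed.

Lemma perc_exp1 E mu : perc_exp E mu (fun=> 1) = 1.
Proof.
elim: {E}_.+1 {-2}E (ltnSn #|E|) => // n IHn E.
case: (set_0Vmem E) => [-> _|[f fE]].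
  by rewrite /perc_exp powerset0 big_set1 /perc_weight setD0 !big_set0 !mulr1.
rewrite (cardsD1 f) fE add1n ltnS => ltEn.
by rewrite (perc_exp_edge _ _ fE) !IHn // !mulr1 addrC subrK.
Qed.

Lemma perc_exp_if E mu (ev : pred {set {set V}}) a b :
  perc_exp E mu (fun X => if ev X then a else b) =
  perc_exp E mu (fun X => (ev X)%:R) * a + (1 - perc_exp E mu (fun X => (ev X)%:R)) * b.
Proof.
have -> : perc_exp E mu (fun X => if ev X then a else b) =
          perc_exp E mu (fun X => a * (ev X)%:R + b * (1 - (ev X)%:R)).
  by apply: eq_perc_exp => X _; case: (ev X); rewrite ?subrr ?subr0 ?mulr1 ?mulr0 ?addr0 ?add0r.
by rewrite perc_expD !perc_expZ perc_expB perc_exp1 mulrC [b * _]mulrC.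
Qed.

Lemma perc_exp_closed E f mu h : f \in E ->
  perc_exp E [eta mu with f |-> 0] h = perc_exp (E :\ f) mu h.
Proof.
move=> fE; rewrite (perc_exp_edge _ _ fE) /= eqxx mul0r add0r subr0 mul1r.
by apply: eq_perc_exp_mu => g /setD1P[/negPf /= ->].
Qed.

Lemma perc_exp_opened E f mu h : f \in E ->
  perc_exp E [eta mu with f |-> 1] h = perc_exp E mu (fun X => h (f |: X)).
Proof.
move=> fE; rewrite !(perc_exp_edge _ _ fE) /= eqxx subrr mul0r addr0 mul1r.
have -> : perc_exp (E :\ f) mu (fun X => h (f |: (f |: X))) =
          perc_exp (E :\ f) mu (fun X => h (f |: X)).
  by apply: eq_perc_exp => X _; rewrite setUA setUid.
rewrite -mulrDl addrC subrK mul1r.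
by apply: eq_perc_exp_mu => g /setD1P[/negPf /= ->].
Qed.
End PercolationExpectation.

Lemma perc_probE (R : realType) (V : finType) (E : {set {set V}}) (mu : {set V} -> R)
    (ev : pred {set {set V}}) :
  perc_prob E mu ev = perc_exp E mu (fun X => (ev X)%:R).
Proof.
rewrite /perc_prob /perc_exp big_mkcondr; apply: eq_bigr => X _.
by case: (ev X); rewrite ?mulr1 ?mulr0.
Qed.

Section PercolationOrder.
Variables (R : numDomainType) (V : finType).
Implicit Types (E X : {set {set V}}) (mu : {set V} -> R) (h : {set {set V}} -> R).

Definition prob_weights E mu := forall f, f \in E -> 0 <= mu f <= 1.

Lemma perc_weight_ge0 E mu X : prob_weights E mu -> X \subset E -> 0 <= perc_weight E mu X.
Proof.
move=> mu01 sXE; apply: mulr_ge0; apply: prodr_ge0 => f.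
  by move=> /(subsetP sXE) /mu01 /andP[].
by rewrite subr_ge0 => /setDP[/mu01 /andP[]].
Qed.

Lemma ler_perc_exp E mu h h' : prob_weights E mu ->
  {in powerset E, forall X, h X <= h' X} -> perc_exp E mu h <= perc_exp E mu h'.
Proof.
move=> mu01 le_h; apply: ler_sum => X XE; rewrite ler_wpM2l ?le_h //.
by apply: perc_weight_ge0; rewrite -?powersetE.
Qed.

Lemma perc_exp_ind_itv E mu (ev : pred {set {set V}}) : prob_weights E mu ->
  0 <= perc_exp E mu (fun X => (ev X)%:R) <= 1.
Proof.
move=> mu01; apply/andP; split.
  by rewrite -[leLHS](perc_exp0 E mu); apply: ler_perc_exp => // X _; rewrite ler0n.
by rewrite -[leRHS](perc_exp1 E mu); apply: ler_perc_exp => // X _; case: (ev X).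
Qed.
End PercolationOrder.

(** * Connectivity *)

Section Joined.
Variable V : finType.
Implicit Types (X Y : {set {set V}}) (u w z : V).

Lemma joined_ind X (P : V -> Prop) u w :
  P u -> (forall z z', P z -> [set z; z'] \in X -> P z') -> joined X u w -> P w.
Proof.
move=> Pu PX /connectP[p]; elim: p u Pu => [|z p IHp] u Pu /=; first by move=> _ ->.
by case/andP=> uz zp; apply: IHp zp; apply: PX uz.
Qed.

Lemma joined_refl X u : joined X u u.
Proof. exact: connect0. Qed.

Lemma joined_edge X u w : [set u; w] \in X -> joined X u w.
Proof. exact: connect1. Qed.

Lemma joined_trans X u w z : joined X u w -> joined X w z -> joined X u z.
Proof. exact: connect_trans. Qed.

Lemma joined_sym X u w : joined X u w = joined X w u.
Proof. by apply: sym_connect_sym => x y; rewrite setUC. Qed.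

Lemma joined_mono X Y u w : X \subset Y -> joined X u w -> joined Y u w.
Proof. by move=> sXY; apply: connect_sub => x y /(subsetP sXY); apply: connect1. Qed.
End Joined.

Definition conn_prob (R : comNzRingType) (V : finType) (E : {set {set V}})
    (mu : {set V} -> R) (u w : V) : R :=
  perc_exp E mu (fun X => (joined X u w)%:R).

Section Relabel.
Variables (V W : finType) (phi : V -> W).
Hypothesis phi_inj : injective phi.

Definition relabel (X : {set {set V}}) : {set {set W}} := [set phi @: f | f : {set V} in X].

Let imset_phi_inj : injective (fun f : {set V} => phi @: f) := imset_inj phi_inj.

Lemma relabel_inj : injective relabel.
Proof. exact: imset_inj. Qed.

Lemma imset_set2 u w : phi @: [set u; w] = [set phi u; phi w].
Proof. by rewrite imsetU1 imset_set1. Qed.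

Lemma joined_relabel X u w : joined (relabel X) (phi u) (phi w) = joined X u w.
Proof.
apply/idP/idP=> [|uw]; last first.
  apply: (joined_ind (P := fun z => joined (relabel X) (phi u) (phi z))) uw.
    exact: joined_refl.
  move=> z z' uz zz'; apply: joined_trans uz (joined_edge _).
  by rewrite -imset_set2 imset_f.
move=> uw; have [z /phi_inj -> //] : exists2 z, phi w = phi z & joined X u z.
apply: (joined_ind (P := fun y => exists2 z, y = phi z & joined X u z)) uw.
  by exists u; rewrite ?joined_refl.
move=> y y' [z -> uz] /imsetP[f fX ef].
have /imsetP[z' _ ey'] : y' \in phi @: f by rewrite -ef !inE eqxx orbT.
subst y'; exists z' => //; apply: joined_trans uz (joined_edge _).
by have -> : [set z; z'] = f by apply: imset_phi_inj; rewrite imset_set2.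
Qed.

Lemma powerset_relabel E : powerset (relabel E) = relabel @: powerset E.
Proof.
apply/setP => Y; apply/idP/imsetP => [|[X XE ->]]; last first.
  by rewrite !powersetE in XE *; apply: imsetS.
rewrite powersetE => sYE; exists [set f in E | phi @: f \in Y].
  by rewrite powersetE; apply/subsetP => f; rewrite inE => /andP[].
apply/setP => g; apply/idP/imsetP => [gY|[f]]; last by rewrite inE => /andP[_ fY] ->.
have /imsetP[f fE eg] := subsetP sYE g gY.
by exists f; rewrite // inE fE -eg gY.
Qed.

Lemma relabel_setD E X : relabel E :\: relabel X = relabel (E :\: X).
Proof.
apply/setP => g; apply/setDP/imsetP => [[/imsetP[f fE ->] gX]|[f /setDP[fE fX] ->]].
  by exists f => //; rewrite inE fE andbT; apply: contra gX => fX; apply: imset_f.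
by rewrite !mem_imset.
Qed.

Lemma perc_exp_relabel (R : comNzRingType) E (mu : {set W} -> R) (h : {set {set W}} -> R) :
  perc_exp (relabel E) mu h = perc_exp E (fun f => mu (phi @: f)) (fun X => h (relabel X)).
Proof.
rewrite /perc_exp powerset_relabel big_imset; last by move=> X Y _ _; apply: relabel_inj.
apply: eq_bigr => X _; rewrite /perc_weight relabel_setD !big_imset //.
all: by move=> f g _ _; apply: imset_phi_inj.
Qed.

Lemma conn_prob_relabel (R : comNzRingType) E (mu : {set W} -> R) u w :
  conn_prob (relabel E) mu (phi u) (phi w) = conn_prob E (fun f => mu (phi @: f)) u w.
Proof.
by rewrite /conn_prob perc_exp_relabel; apply: eq_perc_exp => X _; rewrite joined_relabel.
Qed.
End Relabel.

Section CutVertexConnectivity.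
Variables (G : finType) (g0 : G) (E1 E2 : {set {set G * bool}}) (r1 r2 : pred G).
Local Notation V := (G * bool)%type.
Local Notation post := [set (g0, false); (g0, true)].
Hypothesis E1_side : forall f, f \in E1 -> forall z, z \in f -> r1 z.1.
Hypothesis E2_side : forall f, f \in E2 -> forall z, z \in f -> r2 z.1.
Hypothesis sides_meet : forall g, r1 g -> r2 g -> g = g0.
Implicit Types (X : {set {set V}}) (x y z : V).

Lemma joined_post X s s' : joined X (g0, false) (g0, true) -> joined X (g0, s) (g0, s').
Proof. by case: s; case: s' => pq; rewrite ?joined_refl // joined_sym. Qed.

Lemma in_post g s : ((g, s) \in post) = (g == g0).
Proof. by rewrite !inE !xpair_eqE; case: s; rewrite ?andbT ?andbF ?orbF. Qed.

(* The open edges [X2] of side 2, seen from side 1. *)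
Definition shortcut X1 X2 := if joined X2 (g0, false) (g0, true) then post |: X1 else X1.

Lemma joined_shortcut X1 X2 s s' :
  joined X2 (g0, s) (g0, s') -> joined (shortcut X1 X2) (g0, s) (g0, s').
Proof.
case: s; case: s' => J; rewrite ?joined_refl //; apply: joined_post; rewrite /shortcut.
  by rewrite (joined_sym X2) J; apply: joined_edge; rewrite setU11.
by rewrite J; apply: joined_edge; rewrite setU11.
Qed.

Lemma joined_setU_cut X1 X2 x z :
  X1 \subset E1 -> X2 \subset E2 -> r1 x.1 -> joined (X1 :|: X2) x z ->
  (r1 z.1 -> joined (shortcut X1 X2) x z) /\
  (~~ r1 z.1 -> exists s, joined (shortcut X1 X2) x (g0, s) /\ joined X2 (g0, s) z).
Proof.
move=> sX1 sX2 r1x; set Y := shortcut X1 X2.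
have sX1Y : X1 \subset Y by rewrite /Y /shortcut; case: ifP => _; rewrite ?subsetUr.
have at_g0 (t : V) : r1 t.1 -> r2 t.1 -> t = (g0, t.2).
  by move=> r1t r2t; rewrite -(sides_meet r1t r2t) -surjective_pairing.
apply: (joined_ind (P := fun t => (r1 t.1 -> joined Y x t) /\
  (~~ r1 t.1 -> exists s, joined Y x (g0, s) /\ joined X2 (g0, s) t))).
  by split=> [_|]; rewrite ?joined_refl ?r1x.
move=> t t' [IH1 IH2] /setUP[tt'1|tt'2].
  have r1t := E1_side (subsetP sX1 _ tt'1) (setU11 _ _).
  have r1t' := E1_side (subsetP sX1 _ tt'1) (setU1r _ (set11 _)).
  split=> [_|]; last by rewrite r1t'.
  exact: joined_trans (IH1 r1t) (joined_edge (subsetP sX1Y _ tt'1)).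
have r2t := E2_side (subsetP sX2 _ tt'2) (setU11 _ _).
have r2t' := E2_side (subsetP sX2 _ tt'2) (setU1r _ (set11 _)).
have jtt' : joined X2 t t' := joined_edge tt'2.
case r1t: (r1 t.1).
  have et := at_g0 t r1t r2t; split=> [r1t'|_].
    apply: joined_trans (IH1 r1t) _.
    by rewrite et (at_g0 t') // in jtt' *; apply: joined_shortcut.
  by exists t.2; rewrite -et IH1.
have [s [xs st]] := IH2 (negbT r1t); have st' := joined_trans st jtt'.
split=> [r1t'|_]; last by exists s.
apply: joined_trans xs _.
by rewrite (at_g0 t') // in st' *; apply: joined_shortcut.
Qed.

Lemma joined_setU_same_side X1 X2 x y :
  X1 \subset E1 -> X2 \subset E2 -> r1 x.1 -> r1 y.1 ->
  joined (X1 :|: X2) x y = joined (shortcut X1 X2) x y.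
Proof.
move=> sX1 sX2 r1x r1y; apply/idP/idP => [xy|].
  by have [+ _] := joined_setU_cut sX1 sX2 r1x xy; apply.
apply: (joined_ind (P := joined (X1 :|: X2) x)); first exact: joined_refl.
have X1_step t t' : joined (X1 :|: X2) x t -> [set t; t'] \in X1 -> joined (X1 :|: X2) x t'.
  by move=> xt tt'; apply: joined_trans xt (joined_edge _); rewrite inE tt'.
move=> t t' xt; rewrite /shortcut; case: ifP => [pq|_]; last exact: X1_step.
case/setU1P=> [post_tt'|]; last exact: X1_step.
case: t t' xt post_tt' => [g s] [g' s'] + post_tt'.
have /eqP -> : g == g0 by rewrite -(in_post g s) -post_tt' setU11.
have /eqP -> : g' == g0 by rewrite -(in_post g' s') -post_tt' setU1r ?set11.
by move=> xt; apply: joined_trans xt (joined_mono (subsetUr _ _) (joined_post _ _ pq)).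
Qed.

Lemma joined_setU1_post X x t :
  joined (post |: X) x t -> joined X x t \/ exists s, joined X x (g0, s).
Proof.
apply: (joined_ind (P := fun t => joined X x t \/ exists s, joined X x (g0, s))).
  by left; apply: joined_refl.
move=> u u' [xu|[s xs] _]; last by right; exists s.
case/setU1P=> [post_uu'|uu']; last by left; apply: joined_trans xu (joined_edge uu').
case: u xu post_uu' => g s xu post_uu'; right; exists s.
by have /eqP <- : g == g0 by rewrite -(in_post g s) -post_uu' setU11.
Qed.

Lemma joined_setU_cross X1 X2 x y :
  X1 \subset E1 -> X2 \subset E2 -> r1 x.1 -> ~~ r1 y.1 ->
  joined (X1 :|: X2) x y =
  (joined X1 x (g0, false) && joined X2 (g0, false) y) ||
  (joined X1 x (g0, true) && joined X2 (g0, true) y).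
Proof.
move=> sX1 sX2 r1x r1y; apply/idP/idP => [xy|]; last first.
  by case/orP=> /andP[xg g_y];
    apply: joined_trans (joined_mono (subsetUl _ _) xg) (joined_mono (subsetUr _ _) g_y).
have [_ /(_ r1y)[s [xs sy]]] := joined_setU_cut sX1 sX2 r1x xy.
suff [s' xs' s'y] : exists2 s', joined X1 x (g0, s') & joined X2 (g0, s') y.
  by case: s' xs' s'y => -> ->; rewrite ?orbT.
move: xs; rewrite /shortcut; case: ifP => [pq /joined_setU1_post[|[s' xs']]|_ xs].
- by exists s.
- by exists s'; last by apply: joined_trans sy; apply: joined_post.
- by exists s.
Qed.
End CutVertexConnectivity.

(** * The bunkbed inequality across a cut vertex *)

Definition conn_prob2 (R : comNzRingType) (V : finType) (E : {set {set V}})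
    (mu : {set V} -> R) (u w w' : V) : R :=
  perc_exp E mu (fun X => (joined X u w && joined X u w')%:R).

Definition bunkbed_on (R : numDomainType) (G : finType) (E : {set {set G * bool}})
    (mu : {set G * bool} -> R) (r : pred G) :=
  forall x y, r x -> r y ->
    conn_prob E mu (x, false) (y, true) <= conn_prob E mu (x, false) (y, false).

Definition flip_bunk (G : finType) (u : G * bool) : G * bool := (u.1, ~~ u.2).

Lemma flip_bunk_inj (G : finType) : injective (@flip_bunk G).
Proof. by case=> x s [y t] [-> /negb_inj ->]. Qed.

Lemma natr_orb_andb (R : comNzRingType) (a b c d : bool) :
  ((a && b) || (c && d))%:R = a%:R * b%:R + c%:R * d%:R - (a && c)%:R * (b && d)%:R :> R.
Proof. by case: a; case: b; case: c; case: d => /=; ring. Qed.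

Section CutVertexBunkbed.
Variables (R : realDomainType) (G : finType) (g0 : G).
Local Notation V := (G * bool)%type.
Local Notation g0m := (g0, false).
Local Notation g0p := (g0, true).
Local Notation post := [set g0m; g0p].
Variables (E1 E2 : {set {set V}}) (r1 r2 : pred G) (mu : {set V} -> R).
Hypothesis E1_side : forall f, f \in E1 -> forall z, z \in f -> r1 z.1.
Hypothesis E2_side : forall f, f \in E2 -> forall z, z \in f -> r2 z.1.
Hypothesis sides_meet : forall g, r1 g -> r2 g -> g = g0.
Hypothesis sides_cover : forall g, r1 g || r2 g.
Hypotheses (r1g0 : r1 g0) (r2g0 : r2 g0).
Hypotheses (post_in1 : post \in E1) (post_in2 : post \in E2).
Hypothesis E1_E2_meet : forall f, f \in E1 -> f \in E2 -> f = post.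
Hypothesis mu01 : prob_weights (E1 :|: E2) mu.
(* Conditioning on side 2 changes the effective weight of the post. *)
Hypothesis bunkbed1 : forall c, 0 <= c <= 1 -> bunkbed_on E1 [eta mu with post |-> c] r1.
Hypothesis bunkbed2 : forall c, 0 <= c <= 1 -> bunkbed_on E2 [eta mu with post |-> c] r2.
Hypothesis E2_flip : relabel (@flip_bunk G) E2 = E2.
Hypothesis mu_flip : {in E2, forall f : {set V}, mu (@flip_bunk G @: f) = mu f}.

Local Notation E2' := (E2 :\ post).

Let E12_split : E1 :|: E2 = E1 :|: E2'.
Proof.
apply/setP => f; rewrite !inE; case: (boolP (f \in E1)) => //= fE1.
by case: eqP => // fpost; rewrite fpost post_in1 in fE1.
Qed.

Let E12_disjoint : [disjoint E1 & E2'].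
Proof.
rewrite -setI_eq0; apply/eqP/setP => f; rewrite !inE.
by apply/negP => /and3P[f1 /eqP fpost f2]; apply: fpost (E1_E2_meet f1 f2).
Qed.

Let E2'_side f : f \in E2' -> forall z, z \in f -> r2 z.1.
Proof. by case/setD1P=> _; apply: E2_side. Qed.

Let mu01_E1 : prob_weights E1 mu.
Proof. by move=> f f1; apply: mu01; rewrite inE f1. Qed.

Let mu01_E2' : prob_weights E2' mu.
Proof. by move=> f /setD1P[_ f2]; apply: mu01; rewrite inE f2 orbT. Qed.

Let mu_post01 : 0 <= mu post <= 1.
Proof. exact: mu01_E1. Qed.

Let mu_with_post E : perc_exp E [eta mu with post |-> mu post] =1 perc_exp E mu.
Proof. by move=> h; apply: eq_perc_exp_mu => f _ /=; case: eqP => [->|]. Qed.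

Lemma conn_prob_same_side u w : r1 u.1 -> r1 w.1 ->
  conn_prob (E1 :|: E2) mu u w =
  conn_prob E2' mu g0m g0p * conn_prob E1 [eta mu with post |-> 1] u w +
  (1 - conn_prob E2' mu g0m g0p) * conn_prob E1 mu u w.
Proof.
move=> r1u r1w; rewrite /conn_prob E12_split perc_exp_setU // perc_exp_opened //.
rewrite -!perc_expZ -perc_expD; apply: eq_perc_exp => X1; rewrite powersetE => sX1.
rewrite -perc_exp_if; apply: eq_perc_exp => X2; rewrite powersetE => sX2.
by rewrite (joined_setU_same_side E1_side E2'_side sides_meet) // /shortcut; case: ifP.
Qed.

Lemma bunkbed_same_side x y : r1 x -> r1 y ->
  conn_prob (E1 :|: E2) mu (x, false) (y, true) <=
  conn_prob (E1 :|: E2) mu (x, false) (y, false).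
Proof.
move=> r1x r1y; rewrite !conn_prob_same_side //.
have /andP[c_ge0 c_le1] := perc_exp_ind_itv (fun X => joined X g0m g0p) mu01_E2'.
have one01 : 0 <= (1 : R) <= 1 by rewrite ler01 lexx.
have opened := bunkbed1 one01 r1x r1y.
have := bunkbed1 mu_post01 r1x r1y; rewrite /conn_prob !mu_with_post => closed.
by apply: lerD; apply: ler_wpM2l; rewrite ?subr_ge0.
Qed.

(* Independence of the two sides, and inclusion-exclusion over the level at which a
   path crosses the cut vertex. *)
Lemma conn_prob_cross x y s : r1 x -> ~~ r1 y ->
  conn_prob (E1 :|: E2) mu (x, false) (y, s) =
  conn_prob E1 mu (x, false) g0m * conn_prob E2' mu (y, s) g0m +
  conn_prob E1 mu (x, false) g0p * conn_prob E2' mu (y, s) g0p -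
  conn_prob2 E1 mu (x, false) g0m g0p * conn_prob2 E2' mu (y, s) g0m g0p.
Proof.
move=> r1x r1y; rewrite /conn_prob /conn_prob2 E12_split perc_exp_setU //.
under eq_perc_exp => X1 /[!powersetE] sX1.
  under eq_perc_exp => X2 /[!powersetE] sX2.
    rewrite (joined_setU_cross E1_side E2'_side sides_meet) // natr_orb_andb.
    rewrite -!(joined_sym X2 (y, s)).
  over.
  rewrite perc_expB perc_expD !perc_expZ.
over.
by rewrite perc_expB perc_expD !perc_expZr.
Qed.

(* Flipping the levels of side 2 fixes the post and exchanges [g0m] and [g0p]. *)
Let E2'_flip : relabel (@flip_bunk G) E2' = E2'.
Proof.
rewrite -(relabel_setD (@flip_bunk_inj G)) E2_flip /relabel imset_set1.
by rewrite (imset_set2 (@flip_bunk G)) setUC.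
Qed.

Let perc_exp_flip h : perc_exp E2' mu (fun X => h (relabel (@flip_bunk G) X)) = perc_exp E2' mu h.
Proof.
rewrite -{2}E2'_flip (perc_exp_relabel (@flip_bunk_inj G)).
by apply: eq_perc_exp_mu => f /setD1P[_ f2]; rewrite mu_flip.
Qed.

Let conn_prob_flip u w : conn_prob E2' mu (flip_bunk u) (flip_bunk w) = conn_prob E2' mu u w.
Proof.
rewrite /conn_prob -[LHS]perc_exp_flip; apply: eq_perc_exp => X _.
by rewrite joined_relabel //; apply: flip_bunk_inj.
Qed.

Let conn_prob2_flip u w w' :
  conn_prob2 E2' mu (flip_bunk u) (flip_bunk w) (flip_bunk w') = conn_prob2 E2' mu u w w'.
Proof.
rewrite /conn_prob2 -[LHS]perc_exp_flip; apply: eq_perc_exp => X _.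
by rewrite !joined_relabel //; apply: flip_bunk_inj.
Qed.

Lemma bunkbed_cross x y : r1 x -> ~~ r1 y ->
  conn_prob (E1 :|: E2) mu (x, false) (y, true) <=
  conn_prob (E1 :|: E2) mu (x, false) (y, false).
Proof.
move=> r1x r1y; rewrite !conn_prob_cross //.
have -> : conn_prob E2' mu (y, true) g0m = conn_prob E2' mu (y, false) g0p :=
  conn_prob_flip (y, false) g0p.
have -> : conn_prob E2' mu (y, true) g0p = conn_prob E2' mu (y, false) g0m :=
  conn_prob_flip (y, false) g0m.
have -> : conn_prob2 E2' mu (y, true) g0m g0p = conn_prob2 E2' mu (y, false) g0m g0p.
  have -> : conn_prob2 E2' mu (y, true) g0m g0p = conn_prob2 E2' mu (y, false) g0p g0m :=
    conn_prob2_flip (y, false) g0p g0m.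
  by apply: eq_perc_exp => X _; rewrite andbC.
have jq_le_jp : conn_prob E1 mu (x, false) g0p <= conn_prob E1 mu (x, false) g0m.
  by have := bunkbed1 mu_post01 r1x r1g0; rewrite /conn_prob !mu_with_post.
have kq_le_kp : conn_prob E2' mu (y, false) g0p <= conn_prob E2' mu (y, false) g0m.
  have r2y : r2 y by move: (sides_cover y); rewrite (negbTE r1y).
  have zero01 : 0 <= (0 : R) <= 1 by rewrite lexx ler01.
  by have := bunkbed2 zero01 r2y r2g0; rewrite /conn_prob !perc_exp_closed.
rewrite lerD2r -subr_ge0.
set jm := conn_prob E1 mu _ g0m; set jp := conn_prob E1 mu _ g0p.
set km := conn_prob E2' mu _ g0m; set kp := conn_prob E2' mu _ g0p.
have -> : jm * km + jp * kp - (jm * kp + jp * km) = (jm - jp) * (km - kp) by ring.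
by rewrite mulr_ge0 // subr_ge0.
Qed.

Theorem cut_vertex_bunkbed x y : r1 x ->
  conn_prob (E1 :|: E2) mu (x, false) (y, true) <=
  conn_prob (E1 :|: E2) mu (x, false) (y, false).
Proof.
move=> r1x; case r1y: (r1 y); first exact: bunkbed_same_side.
exact: bunkbed_cross (negbT r1y).
Qed.
End CutVertexBunkbed.

(** * Gluing two graphs *)

Lemma mem_edges (T : finType) (e : rel T) u w : e u w -> [set u; w] \in edges e.
Proof. by move=> euw; apply/imsetP; exists (u, w); rewrite ?inE. Qed.

Lemma edgesP (T : finType) (e : rel T) f :
  f \in edges e -> exists u w, e u w /\ f = [set u; w].
Proof. by case/imsetP=> -[u w]; rewrite inE /= => euw ->; exists u, w. Qed.

Lemma flip_bunk_weight (R : comNzRingType) (G : finType) (e : rel G) (mu : {set G * bool} -> R) :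
  (forall x y, e x y -> mu [set (x, false); (y, false)] = mu [set (x, true); (y, true)]) ->
  {in edges (bb_rel e), forall f : {set G * bool}, mu (@flip_bunk G @: f) = mu f}.
Proof.
move=> mu_sym f /edgesP[[x s] [[y t] [exy ->]]]; rewrite imset_set2 /flip_bunk /=.
case/orP: exy => /andP[/eqP /= <- exy]; first by case: s; rewrite ?mu_sym.
by case: s exy; case: t => //= _; rewrite setUC.
Qed.

Definition lift_bunk (T G : finType) (phi : T -> G) (u : T * bool) : G * bool :=
  (phi u.1, u.2).

Lemma mem_relabel_edges (T G : finType) (e : rel T) (phi : T -> G) x y s t :
  bb_rel e (x, s) (y, t) ->
  [set (phi x, s); (phi y, t)] \in relabel (lift_bunk phi) (edges (bb_rel e)).
Proof.
by move=> exy; apply/imsetP; exists [set (x, s); (y, t)]; rewrite ?imset_set2 ?mem_edges.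
Qed.

Section Embedding.
Variables (T G : finType) (eT : rel T) (eG : rel G) (phi : T -> G).
Hypothesis phi_inj : injective phi.
Hypothesis phi_hom : {homo phi : x y / eT x y >-> eG x y}.
Local Notation ET := (relabel (lift_bunk phi) (edges (bb_rel eT))).

Lemma lift_bunk_inj : injective (lift_bunk phi).
Proof. by case=> x s [y t] [/phi_inj -> ->]. Qed.

Lemma relabel_edges_sub : ET \subset edges (bb_rel eG).
Proof.
apply/subsetP => f /imsetP[g /edgesP[u [w [euw ->]]] ->]; rewrite imset_set2.
apply: mem_edges; case/orP: euw => /andP[uw1 uw2]; rewrite /bb_rel /=.
  by rewrite uw1 phi_hom.
by rewrite (eqP uw1) eqxx uw2 orbT.
Qed.

Lemma relabel_edges_side f : f \in ET -> forall z, z \in f -> z.1 \in codom phi.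
Proof. by case/imsetP=> g _ -> _ /imsetP[u _ ->]; apply: codom_f. Qed.

Lemma relabel_edges_flip : relabel (@flip_bunk G) ET = ET.
Proof.
apply/eqP; rewrite eqEcard [#|relabel _ ET|]card_imset ?leqnn ?andbT; last exact: imset_inj (@flip_bunk_inj G).
apply/subsetP => f /imsetP[g /imsetP[h /edgesP[[x s] [[y t] [exy ->]]] ->] ->].
rewrite !imset_set2; apply/imsetP; exists [set (x, ~~ s); (y, ~~ t)]; last first.
  by rewrite imset_set2.
by apply: mem_edges; move: exy; rewrite /bb_rel /=; case: s; case: t.
Qed.

Lemma bunkbed_relabel (R : realType) (nu : {set G * bool} -> R) :
  bunkbed R eT -> prob_weights ET nu ->
  (forall x y, eT x y -> nu [set (phi x, false); (phi y, false)] =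
                         nu [set (phi x, true); (phi y, true)]) ->
  bunkbed_on ET nu [pred g | g \in codom phi].
Proof.
move=> bbT nu01 nu_sym _ _ /codomP[x ->] /codomP[y ->].
have nuT01 f : f \in edges (bb_rel eT) -> 0 <= nu (lift_bunk phi @: f) <= 1.
  by move=> fT; apply: nu01; apply: imset_f.
have nuT_sym x' y' : eT x' y' ->
    nu (lift_bunk phi @: [set (x', false); (y', false)]) =
    nu (lift_bunk phi @: [set (x', true); (y', true)]).
  by move=> exy; rewrite !imset_set2; apply: nu_sym.
rewrite -[(phi x, false)]/(lift_bunk phi (x, false)).
rewrite -[(phi y, true)]/(lift_bunk phi (y, true)) -[(phi y, false)]/(lift_bunk phi (y, false)).
rewrite !(conn_prob_relabel lift_bunk_inj) /conn_prob -!perc_probE.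
exact: bbT _ nuT01 nuT_sym x y.
Qed.
End Embedding.

Section Glue.
Variables (TA TB : finType) (eA : rel TA) (eB : rel TB) (a : TA) (b : TB).
Local Notation G := (glue_vert TA b).
Local Notation eD := (glue_rel eA eB a b).
Local Notation inA := (@inl TA {y : TB | y != b}).
Local Notation inB := (glue_inB a b).
Local Notation g0 := (inA a).
Local Notation post := [set (g0, false); (g0, true)].
Local Notation EA := (relabel (lift_bunk inA) (edges (bb_rel eA))).
Local Notation EB := (relabel (lift_bunk inB) (edges (bb_rel eB))).
Local Notation sideA := [pred g : G | g \in codom inA].
Local Notation sideB := [pred g : G | g \in codom inB].

Lemma glue_inB_b : inB b = g0.
Proof.
by rewrite /glue_inB; destruct (boolP (b != b)) as [h|h] => //; exfalso; move: h; rewrite eqxx.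
Qed.

Lemma glue_inB_inl y x : inB y = inA x -> y = b /\ x = a.
Proof.
by rewrite /glue_inB; destruct (boolP (y != b)) as [h|h] => //; move: (h) => /negPn/eqP -> [->].
Qed.

Lemma glue_inB_inr y w : inB y = inr w -> y = val w.
Proof. by rewrite /glue_inB; destruct (boolP (y != b)) as [h|h] => // -[<-]. Qed.

Lemma glue_inB_val w : inB (val w) = inr w.
Proof.
case: w => y yb /=; rewrite /glue_inB.
destruct (boolP (y != b)) as [yb'|yb']; last by rewrite yb in yb'.
by congr inr; apply: val_inj.
Qed.

Lemma glue_inB_inj : injective inB.
Proof.
move=> y y'; case ey: (inB y) => [x|w] /esym.
  by have [-> _] := glue_inB_inl ey => /glue_inB_inl[->].
by move/glue_inB_inr ->; rewrite (glue_inB_inr ey).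
Qed.

Lemma glue_rel_inA : {homo inA : x y / eA x y >-> eD x y}.
Proof.
by move=> x y exy; apply/orP; left; apply/existsP; exists x; apply/existsP; exists y;
  rewrite exy !eqxx.
Qed.

Lemma glue_rel_inB : {homo inB : x y / eB x y >-> eD x y}.
Proof.
by move=> x y exy; apply/orP; right; apply/existsP; exists x; apply/existsP; exists y;
  rewrite exy !eqxx.
Qed.

Lemma edges_glue : edges (bb_rel eD) = EA :|: EB.
Proof.
apply/eqP; rewrite eqEsubset subUset !relabel_edges_sub ?andbT; last first.
- exact: glue_rel_inB.
- exact: glue_rel_inA.
apply/subsetP => f /edgesP[[u s] [[w t] [+ ->]]]; case/orP => /andP[/= st].
  rewrite -(eqP st); case/orP => /existsP[x /existsP[y /andP[/andP[exy /eqP <-] /eqP <-]]].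
    by rewrite inE mem_relabel_edges // /bb_rel /= eqxx exy.
  by rewrite inE (mem_relabel_edges inB) ?orbT // /bb_rel /= eqxx exy.
move: st => /eqP <- st; case: u => [x|y].
  by rewrite inE mem_relabel_edges // /bb_rel /= eqxx st orbT.
by rewrite inE -glue_inB_val (mem_relabel_edges inB) ?orbT // /bb_rel /= eqxx st orbT.
Qed.

Lemma glue_sides_meet g : sideA g -> sideB g -> g = g0.
Proof. by move=> /codomP[x ->] /codomP[y /esym /glue_inB_inl[_ ->]]. Qed.

Lemma glue_sides_cover g : sideA g || sideB g.
Proof. by case: g => [x|w]; rewrite !inE ?codom_f // -glue_inB_val codom_f orbT. Qed.

Lemma g0_sideA : sideA g0.
Proof. exact: codom_f. Qed.

Lemma g0_sideB : sideB g0.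
Proof. by rewrite inE -glue_inB_b codom_f. Qed.

Lemma post_in_EA : post \in EA.
Proof. by apply: (mem_relabel_edges inA); rewrite /bb_rel /= eqxx. Qed.

Lemma post_in_EB : post \in EB.
Proof. by rewrite -glue_inB_b (mem_relabel_edges inB) // /bb_rel /= eqxx. Qed.

Lemma EA_EB_meet : irreflexive eA -> forall f, f \in EA -> f \in EB -> f = post.
Proof.
move=> irrA _ /imsetP[g /edgesP[[x s] [[y t] [exy ->]]] ->].
rewrite imset_set2 /lift_bunk /= => fB.
have at_a z s' : (inA z, s') \in [set (inA x, s); (inA y, t)] -> z = a.
  by move=> /(relabel_edges_side fB) /(glue_sides_meet (codom_f inA z)) [].
have ex := at_a x s (setU11 _ _); have ey := at_a y t (setU1r _ (set11 _)).
clear at_a fB; subst x y; case/orP: exy => /andP[_]; first by rewrite /= irrA.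
by case: s; case: t => //= _; rewrite setUC.
Qed.

Lemma horizontal_neq_post (x y : G) s : [set (x, s); (y, s)] != post.
Proof.
have : (g0, ~~ s) \notin [set (x, s); (y, s)].
  by rewrite !inE !xpair_eqE; case: s; rewrite ?andbF.
by apply: contraNneq => ->; rewrite !inE !xpair_eqE eqxx; case: (~~ s).
Qed.

Variables (R : realType) (mu : {set G * bool} -> R).
Hypothesis mu01 : prob_weights (edges (bb_rel eD)) mu.
Hypothesis mu_sym : forall x y, eD x y ->
  mu [set (x, false); (y, false)] = mu [set (x, true); (y, true)].

Lemma glue_side_bunkbed (T : finType) (e : rel T) (phi : T -> G) :
  injective phi -> {homo phi : x y / e x y >-> eD x y} -> bunkbed R e ->
  forall c, 0 <= c <= 1 ->
  bunkbed_on (relabel (lift_bunk phi) (edges (bb_rel e))) [eta mu with post |-> c]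
    [pred g | g \in codom phi].
Proof.
move=> phi_inj phi_hom bbT c c01; apply: bunkbed_relabel => //.
  move=> f /(subsetP (relabel_edges_sub phi_hom)) fD /=.
  by case: eqP => // _; apply: mu01.
by move=> x y exy /=; rewrite !(negPf (horizontal_neq_post _ _ _)); apply/mu_sym/phi_hom.
Qed.

Lemma glue_flip_weight (T : finType) (e : rel T) (phi : T -> G) :
  {homo phi : x y / e x y >-> eD x y} ->
  {in relabel (lift_bunk phi) (edges (bb_rel e)), forall f : {set G * bool},
    mu (@flip_bunk G @: f) = mu f}.
Proof.
move=> phi_hom f /(subsetP (relabel_edges_sub phi_hom)).
exact: flip_bunk_weight mu_sym f.
Qed.

Lemma glue_bunkbed x y : irreflexive eA -> bunkbed R eA -> bunkbed R eB ->
  conn_prob (edges (bb_rel eD)) mu (x, false) (y, true) <=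
  conn_prob (edges (bb_rel eD)) mu (x, false) (y, false).
Proof.
move=> irrA bbA bbB; rewrite edges_glue.
have bbA' := glue_side_bunkbed (@inl_inj _ _) glue_rel_inA bbA.
have bbB' := glue_side_bunkbed glue_inB_inj glue_rel_inB bbB.
have sideA_EA := relabel_edges_side (eT := eA) (phi := inA).
have sideB_EB := relabel_edges_side (eT := eB) (phi := inB).
have flipA := relabel_edges_flip eA inA; have flipB := relabel_edges_flip eB inB.
have muflipA := glue_flip_weight glue_rel_inA; have muflipB := glue_flip_weight glue_rel_inB.
have mu01AB : prob_weights (EA :|: EB) mu by rewrite -edges_glue.
have mu01BA : prob_weights (EB :|: EA) mu by rewrite setUC.
have meetBA g : g \in codom inB -> g \in codom inA -> g = g0.
  by move=> Bg Ag; apply: glue_sides_meet.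
have coverBA g : (g \in codom inB) || (g \in codom inA) by rewrite orbC glue_sides_cover.
have EB_EA_meet f : f \in EB -> f \in EA -> f = post by move=> fB fA; apply: EA_EB_meet.
case/orP: (glue_sides_cover x) => [Ax|Bx].
  exact: (cut_vertex_bunkbed sideA_EA sideB_EB glue_sides_meet glue_sides_cover
    g0_sideA g0_sideB post_in_EA post_in_EB (EA_EB_meet irrA) mu01AB
    bbA' bbB' flipB muflipB y Ax).
rewrite setUC; exact: (cut_vertex_bunkbed sideB_EB sideA_EA meetBA coverBA
  g0_sideB g0_sideA post_in_EB post_in_EA EB_EA_meet mu01BA
  bbB' bbA' flipA muflipA y Bx).
Qed.
End Glue.

Theorem theorem3p5 (R : realType) (TA TB : finType)
    (eA : rel TA) (eB : rel TB) (a : TA) (b : TB) :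
  simple_graph eA -> simple_graph eB ->
  bunkbed R eA -> bunkbed R eB ->
  bunkbed R (glue_rel eA eB a b).
Proof.
move=> [_ irrA] _ bbA bbB mu mu01 mu_sym x y.
by rewrite !perc_probE; apply: glue_bunkbed.
Qed.
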